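(* Let $m \in \mathbb N$ and $X \in M_m$. If there exists $Y \in M_m$ such that $X + Y \in \mathcal U_m$ and $X - Y \in \mathcal U_m$, then there exist $U, V \in \mathcal U_m$, $p, q, r \in \mathbb N \cup\{0\}$, $m_1,\ldots,m_r \in \mathbb N$ and $0 < s_r < \cdots < s_1 < 1$ with $p+q+\sum_{j=1}^r m_j = m$ and $$X = U\Big(I_p \oplus 0_q \oplus \bigoplus_{j=1}^r s_j I_{m_j}\Big)V.$$ Moreover, for any such $U,V,p,q,r,m_j,s_j$, if $Y \in M_m$ satisfies $X \pm Y \in \mathcal U_m$, then there exist $W \in \mathcal U_q$ and $H_j \in \mathcal H_{m_j}\cap\mathcal U_{m_j}$, $j=1,\ldots,r$, such that $$Y = U\Big(0_p \oplus W \oplus \bigoplus_{j=1}^r i\sqrt{1-s_j^2}\, H_j\Big)V.$$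
   Context: $M_m$ is the set of $m\times m$ complex matrices, $\mathcal U_m$ the unitary ones, $\mathcal H_n$ the $n\times n$ complex hermitian matrices; $\oplus$ denotes block-diagonal sum (zero-size blocks omitted). *)

(* Complex numbers are modelled as R[i] (mathcomp-real-closed
   `complex`) over an arbitrary R : realType (i.e. R = the real numbers). *)
From HB Require Import structures.
From mathcomp Require Import all_boot all_order all_algebra.
From mathcomp Require Import reals complex.
Set Implicit Arguments. Unset Strict Implicit. Unset Printing Implicit Defensive.
Import Order.TTheory GRing.Theory Num.Theory.
Local Open Scope ring_scope.
Local Open Scope complex_scope.

Definition dsum (T : nzRingType) (a b : nat) (A : 'M[T]_a) (B : 'M[T]_b)
  : 'M[T]_(a + b) := block_mx A 0 0 B.

(* I_p (+) 0_q (+) (+)_{j<r} s_j I_{m_j}, viewed as an m x m matrix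
   (conform_mx is the identity cast when p + (q + sum_j m_j) = m). *)
Definition Xform (R : realType) (m p q r : nat) (mm : 'I_r -> nat)
  (s : 'I_r -> R) : 'M[R[i]]_m :=
  conform_mx 0
    (dsum (1%:M : 'M[R[i]]_p)
       (dsum (0 : 'M[R[i]]_q)
          (\mxdiag_(j < r) (((s j)%:C)%:M : 'M[R[i]]_(mm j))))).

Definition Yform (R : realType) (m p q r : nat) (mm : 'I_r -> nat)
  (s : 'I_r -> R) (W : 'M[R[i]]_q) (H : forall j : 'I_r, 'M[R[i]]_(mm j))
  : 'M[R[i]]_m :=
  conform_mx 0
    (dsum (0 : 'M[R[i]]_p)
       (dsum W
          (\mxdiag_(j < r) (((Num.sqrt (1 - s j ^+ 2))%:C * 'i) *: H j)))).

(* Write A = X + Y and B = X - Y.  Then X = A (1 + A^H B) / 2 with A^H B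
   unitary, so diagonalising A^H B gives X = U diag(t) V with 0 <= t <= 1, and
   a permutation of the diagonal groups it into the blocks I_p, 0_q, s_j I.
   Conversely, if D + Y and D - Y are unitary then D D^H + Y Y^H = 1 = D^H D + Y^H Y
   and D Y^H + Y D^H = 0, so Y (D^H D) = (D D^H) Y.  For the block form D this
   makes Y block diagonal, and a block Z facing s I satisfies Z Z^H = (1 - s^2) I
   and s (Z + Z^H) = 0: Z = 0 if s = 1, Z is unitary if s = 0, and otherwise
   Z / (i sqrt(1 - s^2)) is hermitian and unitary. *)

From HB Require Import structures.
From mathcomp Require Import all_boot all_order all_algebra all_fingroup.
From mathcomp Require Import reals complex.
From mathcomp Require Import lra.
Set Implicit Arguments. Unset Strict Implicit. Unset Printing Implicit Defensive.
Import Order.TTheory GRing.Theory Num.Theory.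

Local Open Scope ring_scope.
Local Open Scope sesquilinear_scope.

Section AdjointExpansion.
Variables (C : numClosedFieldType) (m n : nat).
Implicit Types A B : 'M[C]_(m, n).

Lemma trmxCD A B : (A + B)^t* = A^t* + B^t*.
Proof. by rewrite linearD map_mxD. Qed.

Lemma trmxCN A : (- A)^t* = - A^t*.
Proof. by rewrite linearN map_mxN. Qed.

Lemma trmxCZ a A : (a *: A)^t* = a^* *: A^t*.
Proof. by apply/matrixP => i j; rewrite !mxE rmorphM. Qed.

Lemma mulmx_trCD A B :
  (A + B) *m (A + B)^t* = A *m A^t* + B *m B^t* + (A *m B^t* + B *m A^t*).
Proof.
rewrite trmxCD mulmxDl !mulmxDr.
by rewrite [B *m A^t* + _]addrC addrACA.
Qed.

Lemma mulmx_trCB A B :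
  (A - B) *m (A - B)^t* = A *m A^t* + B *m B^t* - (A *m B^t* + B *m A^t*).
Proof.
by rewrite mulmx_trCD !(trmxCN, mulNmx, mulmxN) opprK opprD.
Qed.

End AdjointExpansion.

Lemma mulmx_trC_eq0 (C : numClosedFieldType) m n (M : 'M[C]_(m, n)) :
  M *m M^t* = 0 -> M = 0.
Proof.
move=> /matrixP MM; apply/matrixP => a b; rewrite mxE.
have sum0 : \sum_k M a k * (M a k)^* = 0.
  have := MM a a; rewrite !mxE => MMaa.
  by rewrite -[RHS]MMaa; apply: eq_bigr => k _; rewrite !mxE.
have /(_ b isT)/eqP := psumr_eq0P (fun k _ => mul_conjC_ge0 (M a k)) sum0.
by rewrite mul_conjC_eq0 => /eqP.
Qed.

Section AddSubUnitary.
Variables (C : numClosedFieldType) (n : nat) (D Y : 'M[C]_n).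
Hypotheses (DpY : D + Y \is unitarymx) (DmY : D - Y \is unitarymx).

Lemma addsub_unitary_cross : D *m Y^t* + Y *m D^t* = 0.
Proof.
have := etrans (unitarymxP DpY) (esym (unitarymxP DmY)).
rewrite mulmx_trCD mulmx_trCB => /addrI/eqP.
rewrite -subr_eq0 opprK -mulr2n -scaler_nat scaler_eq0 pnatr_eq0 /=.
exact: eqP.
Qed.

Lemma addsub_unitary_sum : D *m D^t* + Y *m Y^t* = 1%:M.
Proof.
by rewrite -(unitarymxP DpY) mulmx_trCD addsub_unitary_cross addr0.
Qed.

End AddSubUnitary.

Lemma addsub_unitary_trsum (C : numClosedFieldType) n (D Y : 'M[C]_n) :
  D + Y \is unitarymx -> D - Y \is unitarymx ->
  D^t* *m D + Y^t* *m Y = 1%:M.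
Proof.
rewrite -trmxC_unitary -[D - Y \is _]trmxC_unitary !trmxCD trmxCN.
by move=> /addsub_unitary_sum h /h; rewrite !trmxCK.
Qed.

Lemma addsub_unitary_comm (C : numClosedFieldType) n (D Y : 'M[C]_n) :
  D + Y \is unitarymx -> D - Y \is unitarymx ->
  Y *m (D^t* *m D) = D *m D^t* *m Y.
Proof.
move=> DpY DmY.
have YtY : D^t* *m D = 1%:M - Y^t* *m Y.
  by rewrite -(addsub_unitary_trsum DpY DmY) addrK.
have YYt : D *m D^t* = 1%:M - Y *m Y^t*.
  by rewrite -(addsub_unitary_sum DpY DmY) addrK.
by rewrite YtY YYt mulmxBr mulmxBl mulmx1 mul1mx mulmxA.
Qed.

Section DsumRing.
Variables (T : nzRingType) (a b : nat).
Implicit Types (A : 'M[T]_a) (B : 'M[T]_b).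

Lemma add_dsum A A' B B' : dsum A B + dsum A' B' = dsum (A + A') (B + B').
Proof. by rewrite /dsum add_block_mx !addr0. Qed.

Lemma opp_dsum A B : - dsum A B = dsum (- A) (- B).
Proof. by rewrite /dsum opp_block_mx !oppr0. Qed.

Lemma mul_dsum A A' B B' : dsum A B *m dsum A' B' = dsum (A *m A') (B *m B').
Proof. by rewrite /dsum mulmx_block !mulmx0 !mul0mx !addr0 add0r. Qed.

Lemma dsum_submxK (Y : 'M[T]_(a + b)) :
  (forall i j, Y (lshift b i) (rshift a j) = 0) ->
  (forall i j, Y (rshift a i) (lshift b j) = 0) ->
  Y = dsum (ulsubmx Y) (drsubmx Y).
Proof.
move=> Yur Ydl; rewrite /dsum -{1}[Y]submxK.
by congr block_mx; apply/matrixP => i j; rewrite !mxE.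
Qed.

End DsumRing.

Lemma mul_mxdiag (T : pzSemiRingType) r (p_ : 'I_r -> nat)
    (A_ B_ : forall i, 'M[T]_(p_ i)) :
  \mxdiag_i A_ i *m \mxdiag_i B_ i = \mxdiag_i (A_ i *m B_ i).
Proof.
rewrite {2}/mxdiag mul_mxdiag_mxblock /mxdiag; apply: eq_mxblock => i j.
by case: eqVneq => [<-|_]; rewrite ?conform_mx_id ?mulmx0.
Qed.

Lemma mxdiag_submxblockK (V : nmodType) r (p_ : 'I_r -> nat)
    (Y : 'M[V]_(\sum_i p_ i)) :
  (forall k l, tagnat.sig1 k != tagnat.sig1 l -> Y k l = 0) ->
  Y = \mxdiag_i submxblock Y i i.
Proof.
move=> Yoff; apply/mxblockP => i j; rewrite mxblockK.
case: eqVneq => [<-|ij]; first by rewrite conform_mx_id.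
by apply/matrixP => k l; rewrite !mxE Yoff // !tagnat.Rank1K.
Qed.

Lemma submxblock_map (T T' : Type) (f : T -> T') p q (p_ : 'I_p -> nat)
    (q_ : 'I_q -> nat) (M : 'M[T]_(\sum_i p_ i, \sum_j q_ j)) i j :
  submxblock (map_mx f M) i j = map_mx f (submxblock M i j).
Proof. by apply/matrixP => k l; rewrite !mxE. Qed.

Section BlockAdjoint.
Variable C : numClosedFieldType.

Lemma trmxC_dsum a b (A : 'M[C]_a) (B : 'M[C]_b) :
  (dsum A B)^t* = dsum (A^t*) (B^t*).
Proof. by rewrite /dsum tr_block_mx map_block_mx !trmx0 !map_mx0. Qed.

Lemma dsum_unitary a b (A : 'M[C]_a) (B : 'M[C]_b) :
  dsum A B \is unitarymx -> A \is unitarymx /\ B \is unitarymx.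
Proof.
move=> /unitarymxP; rewrite trmxC_dsum mul_dsum scalar_mx_block /dsum.
by move=> /eq_block_mx [AA _ _ BB]; split; apply/unitarymxP.
Qed.

Lemma trmxC_mxdiag r (p_ : 'I_r -> nat) (B_ : forall i, 'M[C]_(p_ i)) :
  (\mxdiag_i B_ i)^t* = \mxdiag_i (B_ i)^t*.
Proof.
rewrite tr_mxdiag; apply/mxblockP => i j; rewrite submxblock_map !mxblockK.
by case: eqVneq => [<-|_]; rewrite ?conform_mx_id ?map_mx0.
Qed.

Lemma mxdiag_unitary r (p_ : 'I_r -> nat) (B_ : forall i, 'M[C]_(p_ i)) :
  \mxdiag_i B_ i \is unitarymx -> forall i, B_ i \is unitarymx.
Proof.
move=> /unitarymxP; rewrite trmxC_mxdiag mul_mxdiag -(mxdiagZ (p_ := p_)).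
by move=> /eq_mxdiagP BB i; apply/unitarymxP.
Qed.

End BlockAdjoint.

Lemma commute_diag_mx_eq0 (F : idomainType) n (d : 'rV[F]_n) (Y : 'M[F]_n) :
  Y *m diag_mx d = diag_mx d *m Y -> forall a b, d 0 a != d 0 b -> Y a b = 0.
Proof.
move=> /matrixP YdY a b dab; have /eqP := YdY a b.
rewrite mul_mx_diag mul_diag_mx !mxE [d 0 a * _]mulrC -subr_eq0 -mulrBr.
by rewrite mulf_eq0 subr_eq0 [d 0 b == _]eq_sym (negbTE dab) orbF => /eqP.
Qed.

Section DiagonalUnitary.
Variables (C : numClosedFieldType) (n : nat).

Lemma diag_mx_unitaryP (d : 'rV[C]_n) :
  reflect (forall k, `|d 0 k| = 1) (diag_mx d \is unitarymx).
Proof.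
apply: (iffP unitarymxP); rewrite tr_diag_mx map_diag_mx mulmx_diag -diag_const_mx.
  move=> /matrixP dd k; have := dd k k; rewrite !mxE eqxx !mulr1n -normCK.
  by move=> /eqP; rewrite sqrp_eq1 // => /eqP.
by move=> d1; congr diag_mx; apply/rowP => k; rewrite !mxE -normCK d1 expr1n.
Qed.

Lemma unitarymx_spectral (Q : 'M[C]_n) : Q \is unitarymx ->
  exists P (d : 'rV_n), [/\ P \is unitarymx, forall k, `|d 0 k| = 1
                           & Q = P^t* *m diag_mx d *m P].
Proof.
move=> Qu; have Pu := spectral_unitarymx Q.
have /orthomx_spectralP : Q \is normalmx.
  by apply/normalmxP; rewrite (unitarymxP Qu) (mulmx1C (unitarymxP Qu)).
rewrite invmx_unitary // => QE.
exists (spectralmx Q), (spectral_diag Q); split => //.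
apply/diag_mx_unitaryP; set P := spectralmx Q in QE Pu *.
have -> : diag_mx (spectral_diag Q) = P *m Q *m P^t*.
  by rewrite [in RHS]QE !mulmxA (unitarymxP Pu) mul1mx mulmxtVK.
by rewrite !mul_unitarymx ?trmxC_unitary.
Qed.

Lemma diag_mx_polar (z : 'rV[C]_n) :
  exists2 D, D \is unitarymx & diag_mx z = D *m diag_mx (\row_k `|z 0 k|).
Proof.
pose u k := if z 0 k == 0 then 1 else z 0 k / `|z 0 k|.
exists (diag_mx (\row_k u k)).
  apply/diag_mx_unitaryP => k; rewrite mxE /u; case: eqP => [_|/eqP z0].
    exact: normr1.
  by rewrite normf_div normr_id divff // normr_eq0.
rewrite mulmx_diag; congr diag_mx; apply/rowP => k; rewrite !mxE /u.
by case: eqP => [->|/eqP z0]; rewrite ?normr0 ?mulr0 // divfK // normr_eq0.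
Qed.

End DiagonalUnitary.

Lemma perm_mx_unitary (C : numClosedFieldType) n (sigma : 'S_n) :
  (perm_mx sigma : 'M[C]_n) \is unitarymx.
Proof.
apply/unitarymxP; rewrite tr_perm_mx map_perm_mx -perm_mxM mulgV.
exact: perm_mx1.
Qed.

Lemma trmxC_perm_mx (C : numClosedFieldType) n (sigma : 'S_n) :
  (perm_mx sigma : 'M[C]_n)^t* = perm_mx sigma^-1.
Proof. by rewrite tr_perm_mx map_perm_mx. Qed.

Lemma unitarymx_mulmx_lr (C : numClosedFieldType) n (U A V : 'M[C]_n) :
  U \is unitarymx -> V \is unitarymx ->
  (U *m A *m V \is unitarymx) = (A \is unitarymx).
Proof.
move=> Uu Vu; apply/idP/idP => [UAVu|Au]; last first.
  by apply: mul_unitarymx => //; apply: mul_unitarymx.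
have -> : A = U^t* *m (U *m A *m V) *m V^t*.
  by rewrite !mulmxA mulmxtVK // (mulmx1C (unitarymxP Uu)) mul1mx.
by apply: mul_unitarymx; [apply: mul_unitarymx|]; rewrite // trmxC_unitary.
Qed.

Lemma half_addsub (F : numFieldType) m n (X Y : 'M[F]_(m, n)) :
  X = 2^-1 *: ((X + Y) + (X - Y)).
Proof.
rewrite addrACA subrr addr0 -mulr2n -scaler_nat scalerA mulVf ?scale1r //.
by rewrite pnatr_eq0.
Qed.

Lemma addsub_unitary_decomp (C : numClosedFieldType) n (X Y : 'M[C]_n) :
  X + Y \is unitarymx -> X - Y \is unitarymx ->
  exists U V (t : 'rV[C]_n), [/\ U \is unitarymx, V \is unitarymx,
    forall k, 0 <= t 0 k <= 1 & X = U *m diag_mx t *m V].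
Proof.
set A := X + Y; set B := X - Y => Au Bu.
have Qu : A^t* *m B \is unitarymx by rewrite mul_unitarymx ?trmxC_unitary.
have [P [d [Pu d1 QE]]] := unitarymx_spectral Qu.
pose mu := 2^-1 *: (const_mx 1 + d).
have [D Du muE] := diag_mx_polar mu.
exists (A *m P^t* *m D), P, (\row_k `|mu 0 k|); split => //.
- by rewrite !mul_unitarymx ?trmxC_unitary.
- move=> k; rewrite mxE normr_ge0 /= mxE mxE normrM normfV normr_nat.
  rewrite ler_pdivrMl ?ltr0n // mulr1; apply: le_trans (ler_normD _ _) _.
  by rewrite !mxE d1 normr1.
rewrite -(mulmxA (A *m P^t*) D) -muE {1}(half_addsub X Y) -/A -/B.
have -> : B = A *m (A^t* *m B) by rewrite mulmxA (unitarymxP Au) mul1mx.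
have -> : diag_mx mu = 2^-1 *: (1%:M + diag_mx d).
  by rewrite linearZ linearD /= diag_const_mx.
rewrite QE -[in RHS]scalemxAr -[in RHS]scalemxAl; congr (_ *: _).
by rewrite [in RHS]mulmxDr [in RHS]mulmxDl mulmx1 mulmxKtV // !mulmxA.
Qed.

Lemma scalar_addsub_unitary (C : numClosedFieldType) n (c : C) (Z : 'M[C]_n) :
  c \is Num.real -> c%:M + Z \is unitarymx -> c%:M - Z \is unitarymx ->
  Z *m Z^t* = (1 - c ^+ 2)%:M /\ c *: (Z + Z^t*) = 0.
Proof.
move=> c_real cpZ cmZ.
have cC : (c%:M : 'M_n)^t* = c%:M.
  by rewrite tr_scalar_mx map_scalar_mx; congr (_%:M); exact: conj_Creal.
split; last first.
  have := addsub_unitary_cross cpZ cmZ.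
  by rewrite cC mul_scalar_mx mul_mx_scalar scalerDr addrC.
have := addsub_unitary_sum cpZ cmZ; rewrite cC -scalar_mxM -expr2 => sum1.
by rewrite raddfB /= -sum1 addrAC subrr add0r.
Qed.

Lemma real_complex_real (R : rcfType) (x : R) : (x%:C)%C \is Num.real.
Proof. by apply/complex_realP; exists x. Qed.

Lemma scalar_addsub_unitary_hermitian (R : realType) n (x : R)
    (Z : 'M[R[i]]_n) :
  0 < x < 1 -> (x%:C)%C%:M + Z \is unitarymx -> (x%:C)%C%:M - Z \is unitarymx ->
  exists2 H : 'M_n, H \is hermitianmx n false Num.conj /\ H \is unitarymx
    & Z = ((Num.sqrt (1 - x ^+ 2))%:C * 'i)%C *: H.
Proof.
move=> /andP[x_gt0 x_lt1] xpZ xmZ.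
have [ZZ xZ] := scalar_addsub_unitary (real_complex_real x) xpZ xmZ.
have y_gt0 : 0 < 1 - x ^+ 2 by nra.
set k := (_ * _)%C.
have kC : k^* = - k.
  by rewrite rmorphM /= conjCi mulrN; congr (- (_ * _)); exact: conjc_real.
have kk : k * k^* = 1 - (x%:C)%C ^+ 2.
  rewrite kC mulrN -expr2 exprMn sqrCi mulrN1 opprK -!rmorphXn -rmorphB /=.
  by rewrite sqr_sqrtr ?ltW.
have k_neq0 : k != 0.
  by rewrite mulf_neq0 ?neq0Ci // (inj_eq (@complexI R)) sqrtr_eq0 -ltNge.
have kVC : (k^-1)^* = (k^*)^-1 by exact: fmorphV.
have ZC : Z^t* = - Z.
  move: xZ => /eqP; rewrite scaler_eq0 (inj_eq (@complexI R)) gt_eqF //=.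
  by rewrite addrC addr_eq0 => /eqP.
exists (k^-1 *: Z); last by rewrite scalerA mulfV ?scale1r.
split.
  apply/is_hermitianmxP; rewrite expr0 scale1r trmxCZ ZC kVC kC.
  by rewrite invrN scaleNr scalerN opprK.
apply/unitarymxP; rewrite trmxCZ -scalemxAl -scalemxAr scalerA ZZ.
by rewrite scale_scalar_mx kVC -invfM kk mulVf // -kk mulf_neq0 ?conjC_eq0.
Qed.

Lemma card_fibres_perm (T : eqType) n n' (f : 'I_n -> T) (g : 'I_n' -> T) :
  (forall v, #|[pred a | f a == v]| = #|[pred b | g b == v]|) ->
  exists (e : n' = n) (sigma : 'S_n), forall a, g (cast_ord (esym e) (sigma a)) = f a.
Proof.
move=> fg.
have fg_perm : perm_eq [seq f a | a <- enum 'I_n] [seq g b | b <- enum 'I_n'].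
  apply/allP => v _; apply/eqP; rewrite !count_map.
  by rewrite -!size_filter -!cardE; apply: fg.
have e : n' = n by have := perm_size fg_perm; rewrite !size_map -!enumT !size_enum_ord.
exists e; clear fg; case: n / e in f fg_perm *.
have /tuple_permP[sigma gf] : perm_eq [seq g b | b <- enum 'I_n'] [tuple f a | a < n'].
  by rewrite perm_sym.
exists sigma^-1%g => a; rewrite cast_ord_id.
have /(congr1 (fun l => nth (g a) l (sigma^-1%g a))) := gf.
rewrite (nth_map a) ?size_enum_ord // nth_ord_enum => ->.
by rewrite (nth_map a) ?size_enum_ord // nth_ord_enum tnth_mktuple permKV.
Qed.

Section Xdiag.
Variables (T : pzSemiRingType) (p q r : nat) (mm : 'I_r -> nat).

Definition Xdiag (s : 'I_r -> T) : 'rV[T]_(p + (q + \sum_(j < r) mm j)) :=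
  row_mx (const_mx 1) (row_mx 0 (\mxrow_j (const_mx (s j) : 'rV_(mm j)))).

Variable s : 'I_r -> T.

Lemma Xdiag_lshift i : Xdiag s 0 (lshift _ i) = 1.
Proof. by rewrite row_mxEl mxE. Qed.

Lemma Xdiag_mid i : Xdiag s 0 (rshift p (lshift _ i)) = 0.
Proof. by rewrite row_mxEr row_mxEl mxE. Qed.

Lemma Xdiag_rshift k : Xdiag s 0 (rshift p (rshift q k)) = s (tagnat.sig1 k).
Proof. by rewrite !row_mxEr !mxE. Qed.

End Xdiag.

Lemma Xdiag_rmorph (T T' : pzSemiRingType) (f : {rmorphism T -> T'}) p q r
    (mm : 'I_r -> nat) (s : 'I_r -> T) b :
  Xdiag p q mm (fun j => f (s j)) 0 b = f (Xdiag p q mm s 0 b).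
Proof.
case: (split_ordP b) => [i ->|c ->]; first by rewrite !Xdiag_lshift rmorph1.
case: (split_ordP c) => [i ->|k ->]; first by rewrite !Xdiag_mid rmorph0.
by rewrite !Xdiag_rshift.
Qed.

Lemma Xdiag_ge0 (R : numDomainType) p q r (mm : 'I_r -> nat) (s : 'I_r -> R) b :
  (forall j, 0 <= s j) -> 0 <= Xdiag p q mm s 0 b.
Proof.
move=> s_ge0; case: (split_ordP b) => [i ->|c ->]; first by rewrite Xdiag_lshift.
by case: (split_ordP c) => [i ->|k ->]; rewrite ?Xdiag_mid ?Xdiag_rshift.
Qed.

Lemma sum1_cond_const n (b : bool) : (\sum_(i < n | b) 1)%N = (n * b)%N.
Proof. by rewrite big_mkcond sum_nat_const card_ord. Qed.

Lemma card_Xdiag (T : pzSemiRingType) p q r (mm : 'I_r -> nat) (s : 'I_r -> T) v :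
  #|[pred b | Xdiag p q mm s 0 b == v]| =
  (p * (1%R == v) + (q * (0%R == v) + \sum_(j < r) mm j * (s j == v)))%N.
Proof.
rewrite -sum1_card !big_split_ord /=.
under [X in (X + _)%N]eq_bigl => i do rewrite inE Xdiag_lshift.
under [X in (_ + (X + _))%N]eq_bigl => i do rewrite inE Xdiag_mid.
under [X in (_ + (_ + X))%N]eq_bigl => i do rewrite inE Xdiag_rshift.
rewrite !sum1_cond_const; congr (_ + (_ + _))%N.
under [RHS]eq_bigr => j _ do rewrite -[mm j]card_ord -sum_nat_const.
by rewrite big_mkcond sig_big_dep (reindex _ tagnat.sig_bij_on).
Qed.

Lemma card_fibre_nth (T : eqType) m (t : 'I_m -> T) (sl : seq T) x0 v :
  uniq sl -> (v \in codom t -> v \in sl) ->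
  #|[pred a | t a == v]| =
  (\sum_(j < size sl) #|[pred a | t a == nth x0 sl j]| * (nth x0 sl j == v))%N.
Proof.
move=> sl_uniq t_sl; have [/(nthP x0)[i i_lt <-]|v_sl] := boolP (v \in sl).
  rewrite (bigD1 (Ordinal i_lt)) //= eqxx muln1 big1 ?addn0 // => j.
  by rewrite -val_eqE nth_uniq // => /negbTE->; rewrite muln0.
rewrite big1 => [|j _]; last first.
  by rewrite (negbTE (memPn v_sl _ (mem_nth x0 (ltn_ord j)))) muln0.
apply: eq_card0 => a; rewrite !inE; apply: contraNF v_sl => /eqP tav.
by apply: t_sl; rewrite -tav codom_f.
Qed.

Lemma Xdiag_fibres (R : realDomainType) m (t : 'I_m -> R) :
  (forall a, 0 <= t a <= 1) ->
  exists p q r (mm : 'I_r -> nat) (s : 'I_r -> R),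
    [/\ forall j, (0 < mm j)%N, forall j, 0 < s j < 1,
        forall j k : 'I_r, (j < k)%N -> s k < s j
      & forall v, #|[pred a | t a == v]| = #|[pred b | Xdiag p q mm s 0 b == v]|].
Proof.
move=> t01.
set sl := rev (sort <=%R (undup [seq x <- codom t | 0 < x < 1])).
pose s (j : 'I_(size sl)) := nth 0 sl j.
exists #|[pred a | t a == 1]|, #|[pred a | t a == 0]|, (size sl),
  (fun j => #|[pred a | t a == s j]|), s.
have sl_uniq : uniq sl by rewrite rev_uniq sort_uniq undup_uniq.
have in_sl x : (x \in sl) = (0 < x < 1) && (x \in codom t).
  by rewrite mem_rev mem_sort mem_undup mem_filter.
have s_in j : s j \in sl by exact: mem_nth.
have s01 j : 0 < s j < 1 by have := s_in j; rewrite in_sl => /andP[].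
split => //.
- move=> j; apply/card_gt0P.
  by have := s_in j; rewrite in_sl => /andP[_ /codomP[a ->]]; exists a; rewrite inE.
- move=> j k jk.
  apply: (sorted_ltn_nth (leT := >%R) (rev_trans lt_trans)); rewrite ?inE ?ltn_ord //.
  rewrite rev_sorted -[sorted _ _]/(sorted <%R _) lt_sorted_uniq_le.
  by rewrite sort_uniq undup_uniq sort_le_sorted.
have s_neq1 j : (s j == 1) = false by case/andP: (s01 j) => _ /lt_eqF.
have s_neq0 j : (s j == 0) = false by case/andP: (s01 j) => /gt_eqF.
move=> v; rewrite card_Xdiag.
have [->|v1] := eqVneq v 1.
  rewrite muln1 eq_sym oner_eq0 muln0 big1 ?addn0 // => j _.
  by rewrite s_neq1 muln0.
have [->|v0] := eqVneq v 0.
  rewrite muln0 muln1 add0n big1 ?addn0 // => j _.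
  by rewrite s_neq0 muln0.
rewrite !muln0 !add0n; apply: card_fibre_nth => // /codomP[a tav].
have [ta0 ta1] : t a != 0 /\ t a != 1 by rewrite -tav.
by rewrite tav in_sl codom_f andbT !lt_neqAle eq_sym ta0 ta1 t01.
Qed.

Local Open Scope complex_scope.

Lemma Xform_diag (R : realType) p q r (mm : 'I_r -> nat) (s : 'I_r -> R) :
  Xform _ p q mm s = diag_mx (Xdiag p q mm (fun j => (s j)%:C)).
Proof.
rewrite /Xform conform_mx_id /dsum !diag_mx_row diag_const_mx linear0 diag_mxrow.
by congr block_mx; congr block_mx; apply: eq_mxdiag => j; rewrite diag_const_mx.
Qed.

Lemma Xform_cast (R : realType) p q r (mm : 'I_r -> nat) (s : 'I_r -> R) m
    (e : (p + (q + \sum_(j < r) mm j))%N = m) a b :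
  Xform m p q mm s a b = Xform _ p q mm s (cast_ord (esym e) a) (cast_ord (esym e) b).
Proof. by case: m / e in a b *; rewrite !cast_ord_id. Qed.

Lemma Xform_addsub_unitary_offdiag (R : realType) p q r (mm : 'I_r -> nat)
    (s : 'I_r -> R) (Y : 'M[R[i]]_(p + (q + \sum_(j < r) mm j))) :
  (forall j, 0 <= s j) ->
  Xform _ p q mm s + Y \is unitarymx -> Xform _ p q mm s - Y \is unitarymx ->
  forall a b, Xdiag p q mm s 0 a != Xdiag p q mm s 0 b -> Y a b = 0.
Proof.
move=> s_ge0 XpY XmY a b xab.
(* Y commutes with D^H D, whose diagonal is the square of the nonnegative Xdiag. *)
have := addsub_unitary_comm XpY XmY; rewrite Xform_diag.
set d := Xdiag _ _ _ _.
have dE k : d 0 k = (Xdiag p q mm s 0 k)%:C := Xdiag_rmorph (real_complex R) _ _.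
clearbody d.
have -> : (diag_mx d)^t* = diag_mx d.
  rewrite tr_diag_mx map_diag_mx; congr diag_mx; apply/rowP => k.
  by rewrite !mxE dE; exact: conjc_real.
rewrite !mulmx_diag => /commute_diag_mx_eq0; apply.
rewrite !mxE !dE -!rmorphM (inj_eq (@complexI R)) -!expr2.
by rewrite eqrXn2 ?Xdiag_ge0.
Qed.

Lemma Xform_addsub_unitary_blockdiag (R : realType) p q r (mm : 'I_r -> nat)
    (s : 'I_r -> R) (Y : 'M[R[i]]_(p + (q + \sum_(j < r) mm j))) :
  (forall j, 0 < s j < 1) -> (forall j k : 'I_r, (j < k)%N -> s k < s j) ->
  Xform _ p q mm s + Y \is unitarymx -> Xform _ p q mm s - Y \is unitarymx ->
  exists (Y1 : 'M_p) (W : 'M_q) (Z : forall j, 'M_(mm j)),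
    Y = dsum Y1 (dsum W (\mxdiag_j Z j)).
Proof.
move=> s01 s_dec XpY XmY.
have s_gt0 j : 0 < s j by case/andP: (s01 j).
have s_neq0 j : (s j == 0) = false by rewrite gt_eqF.
have s_neq1 j : (s j == 1) = false by case/andP: (s01 j) => _ /lt_eqF.
have Y_off := Xform_addsub_unitary_offdiag (fun j => ltW (s_gt0 j)) XpY XmY.
have s_inj : injective s.
  move=> j k sjk; apply: val_inj.
  by case: (ltngtP j k) => // /s_dec; rewrite sjk ltxx.
have Yd : drsubmx (drsubmx Y) = \mxdiag_j submxblock (drsubmx (drsubmx Y)) j j.
  apply: mxdiag_submxblockK => k l kl; rewrite !mxE; apply: Y_off.
  by rewrite !Xdiag_rshift (inj_eq s_inj).
have Yr : drsubmx Y = dsum (ulsubmx (drsubmx Y)) (drsubmx (drsubmx Y)).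
  by apply: dsum_submxK => i k; rewrite !mxE; apply: Y_off;
    rewrite Xdiag_mid Xdiag_rshift ?s_neq0 // eq_sym s_neq0.
have Y1 : Y = dsum (ulsubmx Y) (drsubmx Y).
  apply: dsum_submxK => [i k|k i]; apply: Y_off; rewrite Xdiag_lshift;
    case: (split_ordP k) => [l ->|l ->];
    by rewrite ?Xdiag_mid ?Xdiag_rshift ?oner_eq0 ?s_neq1 // eq_sym ?oner_eq0 ?s_neq1.
by do 3!eexists; rewrite {1}Y1 Yr Yd.
Qed.

Lemma Xform_addsub_unitary (R : realType) p q r (mm : 'I_r -> nat)
    (s : 'I_r -> R) (Y : 'M[R[i]]_(p + (q + \sum_(j < r) mm j))) :
  (forall j, 0 < s j < 1) -> (forall j k : 'I_r, (j < k)%N -> s k < s j) ->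
  Xform _ p q mm s + Y \is unitarymx -> Xform _ p q mm s - Y \is unitarymx ->
  exists (W : 'M_q) (H : forall j, 'M_(mm j)),
    [/\ W \is unitarymx,
        forall j, H j \is hermitianmx (mm j) false Num.conj /\ H j \is unitarymx
      & Y = Yform _ p s W H].
Proof.
move=> s01 s_dec XpY XmY.
have [Y1 [W [Z YE]]] := Xform_addsub_unitary_blockdiag s01 s_dec XpY XmY.
move: XpY XmY; rewrite YE /Xform conform_mx_id !opp_dsum !add_dsum -mxdiagN -!mxdiagD.
move=> /dsum_unitary[Y1p /dsum_unitary[Wu /mxdiag_unitary Zp]].
move=> /dsum_unitary[Y1m /dsum_unitary[_ /mxdiag_unitary Zm]].
have Y10 : Y1 = 0.
  have [Y1Y1 _] := scalar_addsub_unitary (rpred1 _) Y1p Y1m.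
  by apply: mulmx_trC_eq0; rewrite Y1Y1 expr1n subrr raddf0.
have /fin_all_exists2[H HH ZH] j := scalar_addsub_unitary_hermitian (s01 j) (Zp j) (Zm j).
exists W, H; split => //; first by rewrite add0r in Wu.
by rewrite Y10 /Yform conform_mx_id; congr (dsum _ (dsum _ _)); exact: eq_mxdiag.
Qed.

Lemma Xform_conj_addsub_unitary (R : realType) m (U V Y : 'M[R[i]]_m) p q r
    (mm : 'I_r -> nat) (s : 'I_r -> R) :
  U \is unitarymx -> V \is unitarymx ->
  (forall j, 0 < s j < 1) -> (forall j k : 'I_r, (j < k)%N -> s k < s j) ->
  (p + q + \sum_(j < r) mm j)%N = m ->
  U *m Xform m p q mm s *m V + Y \is unitarymx ->
  U *m Xform m p q mm s *m V - Y \is unitarymx ->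
  exists (W : 'M_q) (H : forall j, 'M_(mm j)),
    [/\ W \is unitarymx,
        forall j, H j \is hermitianmx (mm j) false Num.conj /\ H j \is unitarymx
      & Y = U *m Yform m p s W H *m V].
Proof.
move=> Uu Vu s01 s_dec; rewrite -addnA => pqm; subst m.
set Y' := U^t* *m Y *m V^t*.
have YE : Y = U *m Y' *m V.
  by rewrite !mulmxA mulmxKtV // (unitarymxP Uu) mul1mx.
rewrite YE -mulmxDl -mulmxDr -mulmxBl -mulmxBr !unitarymx_mulmx_lr //.
move=> /(Xform_addsub_unitary s01 s_dec) XmY' /XmY' [W [H [Wu HH Y'E]]].
by exists W, H; rewrite Y'E.
Qed.

Lemma diag_mx_perm_Xform (R : realType) m (t : 'I_m -> R) :
  (forall a, 0 <= t a <= 1) ->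
  exists p q r (mm : 'I_r -> nat) (s : 'I_r -> R) (P : 'M[R[i]]_m),
    P \is unitarymx /\
    [/\ forall j, (0 < mm j)%N, forall j, 0 < s j < 1,
        forall j k : 'I_r, (j < k)%N -> s k < s j,
        (p + q + \sum_(j < r) mm j)%N = m
      & diag_mx (\row_a (t a)%:C) = P *m Xform m p q mm s *m P^t*].
Proof.
move=> t01; have [p [q [r [mm [s [mm_gt0 s01 s_dec fib]]]]]] := Xdiag_fibres t01.
have [e [sigma tE]] := card_fibres_perm fib.
exists p, q, r, mm, s, (perm_mx sigma); split; first exact: perm_mx_unitary.
split => //; first by rewrite -addnA e.
rewrite trmxC_perm_mx -row_permE -col_permE; apply/matrixP => a b.
rewrite !mxE (Xform_cast s e) Xform_diag [in RHS]mxE.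
rewrite (Xdiag_rmorph (real_complex R)) tE.
by rewrite (inj_eq (@cast_ord_inj _ _ _)) (inj_eq (@perm_inj _ _)).
Qed.

Lemma addsub_unitary_Xform_decomp (R : realType) m (X Y : 'M[R[i]]_m) :
  X + Y \is unitarymx -> X - Y \is unitarymx ->
  exists (U V : 'M[R[i]]_m) (p q r : nat) (mm : 'I_r -> nat) (s : 'I_r -> R),
    U \is unitarymx /\ V \is unitarymx /\
    (forall j, 0 < mm j)%N /\
    (forall j, 0 < s j < 1) /\
    (forall j k : 'I_r, (j < k)%N -> s k < s j) /\
    (p + q + \sum_(j < r) mm j)%N = m /\
    X = U *m Xform m p q mm s *m V.
Proof.
move=> XpY XmY; have [U0 [V0 [t [U0u V0u t01 XE]]]] := addsub_unitary_decomp XpY XmY.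
pose t' a := complex.Re (t 0 a).
have tE : t = \row_a (t' a)%:C.
  by apply/rowP => a; rewrite mxE RRe_real // ger0_real //; case/andP: (t01 a).
have t'01 a : 0 <= t' a <= 1.
  by have := t01 a; rewrite tE mxE ler0c -[X in _%:C <= X]/(1%:C) lecR.
have [p [q [r [mm [s [P [Pu [mm_gt0 s01 s_dec pqm DE]]]]]]]] := diag_mx_perm_Xform t'01.
exists (U0 *m P), (P^t* *m V0), p, q, r, mm, s.
rewrite !mul_unitarymx ?trmxC_unitary //; do !split => //.
by rewrite XE tE DE !mulmxA.
Qed.

Local Close Scope sesquilinear_scope.

Theorem lemma3p7 (R : realType) (m : nat) (X : 'M[R[i]]_m) :
  (exists Y : 'M[R[i]]_m, (X + Y) \is unitarymx /\ (X - Y) \is unitarymx) ->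
  (exists (U V : 'M[R[i]]_m) (p q r : nat) (mm : 'I_r -> nat) (s : 'I_r -> R),
     U \is unitarymx /\ V \is unitarymx /\
     (forall j, 0 < mm j)%N /\
     (forall j, 0 < s j < 1) /\
     (forall j k : 'I_r, (j < k)%N -> s k < s j) /\
     (p + q + \sum_(j < r) mm j)%N = m /\
     X = U *m Xform m p q mm s *m V)
  /\
  (forall (U V : 'M[R[i]]_m) (p q r : nat) (mm : 'I_r -> nat) (s : 'I_r -> R),
     U \is unitarymx -> V \is unitarymx ->
     (forall j, 0 < mm j)%N ->
     (forall j, 0 < s j < 1) ->
     (forall j k : 'I_r, (j < k)%N -> s k < s j) ->
     (p + q + \sum_(j < r) mm j)%N = m ->
     X = U *m Xform m p q mm s *m V ->
     forall Y : 'M[R[i]]_m,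
       (X + Y) \is unitarymx -> (X - Y) \is unitarymx ->
       exists (W : 'M[R[i]]_q) (H : forall j : 'I_r, 'M[R[i]]_(mm j)),
         [/\ W \is unitarymx,
             (forall j, H j \is hermitianmx (mm j) false Num.conj
                        /\ H j \is unitarymx)
           & Y = U *m Yform m p s W H *m V]).
Proof.
move=> [Y0 [XpY XmY]]; split; first exact: addsub_unitary_Xform_decomp XpY XmY.
move=> U V p q r mm s Uu Vu _ s01 s_dec pqm -> Y.
exact: Xform_conj_addsub_unitary.
Qed.
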